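(* Let $0\le\underline{s}<\overline{s}\le1$, $p\in(0,1)$, $u,v>0$ with $u\ne v$, and fix $\varepsilon_0>0$ with $C_{\varepsilon_0}\ne\emptyset$. There exist $\underline{\lambda}>0$ and $\overline{\lambda}<+\infty$ such that for every $f\in F^\infty_{(\underline{s},\overline{s})}$: if $G_f(\lambda,0)=G_f(\lambda,c)=0$ for some $c\in C_{\varepsilon_0}$ and some $\lambda\in\mathcal{E}_0\cap\mathcal{E}_c\cap\big((0,\underline{\lambda})\cup(\overline{\lambda},+\infty)\big)$, then there exist $\underline{s}<z_1<z_2<\overline{s}$ with $f(s)=0$ for all $s\in[z_1,z_2]$.
   Context: $F^\infty_{(\underline{s},\overline{s})}=\{f\in L_\infty(\underline{s},\overline{s})\cap C^0(\underline{s},\overline{s}): \int_{\underline{s}}^{\overline{s}} f(s)\frac{1-2s}{s}ds=0,\ \int_{\underline{s}}^{\overline{s}} f=1,\ f\ge0,\ f(s)\frac{1-s}{s}\in L_\infty(\underline{s},\overline{s})\}$. For $\lambda>0$, $c\in(-1,u)\cap(-v,1)$: $m(\lambda,c)=\frac{\lambda(1+c)}{\lambda(1+c)+(u-c)}$, $mm(\lambda,c)=\frac{\lambda(1-c)}{\lambda(1-c)+(v+c)}$; $\mathcal{E}_c=\{\lambda>0: m(\lambda,c),mm(\lambda,c)\in(\underline{s},\overline{s})\}$. $C=\{c\in(-1,u)\cap(-v,1):\mathcal{E}_c\ne\emptyset\}\setminus\{0\}$, $C_{\varepsilon_0}=C\cap(-1+\varepsilon_0,u-\varepsilon_0)\cap(-v+\varepsilon_0,1-\varepsilon_0)$.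 $G_f(\lambda,c)=p\int_{\underline{s}}^{m(\lambda,c)} f(s)\frac{1-2s}{s}ds+(1-p)\int_{mm(\lambda,c)}^{\overline{s}} f(s)\frac{1-2s}{s}ds$. *)

From HB Require Import structures.
From mathcomp Require Import all_boot all_order all_algebra.
From mathcomp Require Import all_classical all_reals all_analysis.
Set Implicit Arguments. Unset Strict Implicit. Unset Printing Implicit Defensive.
Import Order.TTheory GRing.Theory Num.Theory.
Import numFieldNormedType.Exports.
Local Open Scope classical_set_scope.
Local Open Scope ring_scope.

Section Defs.
Variable R : realType.
Notation leb := (@lebesgue_measure R).

Definition Finf (slo shi : R) (f : R -> R) : Prop :=
  [/\ {within `]slo, shi[, continuous f},
      (* f in L_infty(slo,shi) (for continuous f: bounded on the interval) *)
      (exists M : R, forall s, slo < s < shi -> `|f s| <= M),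
      (exists M : R, forall s, slo < s < shi -> `|f s * (1 - s) / s| <= M),
      (forall s, slo < s < shi -> 0 <= f s) &
      ((\int[leb]_(s in `]slo, shi[) (f s)%:E = 1%E)%E /\
       (\int[leb]_(s in `]slo, shi[) (f s * (1 - 2 * s) / s)%:E = 0%E)%E)].

Definition m_ (u lam c : R) : R := lam * (1 + c) / (lam * (1 + c) + (u - c)).
Definition mm_ (v lam c : R) : R := lam * (1 - c) / (lam * (1 - c) + (v + c)).

Definition Eset (slo shi u v c : R) : set R :=
  [set lam | 0 < lam /\ slo < m_ u lam c < shi /\ slo < mm_ v lam c < shi].

Definition cdom (u v c : R) : Prop := -1 < c < u /\ - v < c < 1.

Definition Cset (slo shi u v : R) : set R :=
  [set c | cdom u v c /\ Eset slo shi u v c !=set0 /\ c != 0].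

Definition Ceps (slo shi u v eps0 : R) : set R :=
  [set c | c \in Cset slo shi u v /\ -1 + eps0 < c < u - eps0 /\
           - v + eps0 < c < 1 - eps0].

Definition Gf (slo shi p u v : R) (f : R -> R) (lam c : R) : R :=
  p * (\int[leb]_(s in `]slo, m_ u lam c[) (f s * (1 - 2 * s) / s))
  + (1 - p) * (\int[leb]_(s in `]mm_ v lam c, shi[) (f s * (1 - 2 * s) / s)).

End Defs.

(* Moving c away from 0 moves the cut points m(lam, .) and mm(lam, .) in
   opposite directions, so G_f(lam, c) - G_f(lam, 0) is, up to sign,
   p times the integral of g(s) = f(s) (1 - 2s) / s between m(lam, 0) and
   m(lam, c) plus (1 - p) times its integral between mm(lam, c) and mm(lam, 0).
   For lam small all four cut points lie below 1/2, for lam large above 1/2,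
   so g has a constant sign on both intervals.  Both integrals then vanish,
   and a continuous function of constant sign with zero integral over an open
   interval is zero there; since 1 - 2s does not vanish inside the first
   interval, neither does f. *)

From HB Require Import structures.
From mathcomp Require Import all_boot all_order all_algebra.
From mathcomp Require Import all_classical all_reals all_analysis.
From mathcomp Require Import measurable_realfun ring lra.
Set Implicit Arguments. Unset Strict Implicit. Unset Printing Implicit Defensive.
Import Order.TTheory GRing.Theory Num.Theory.
Import numFieldNormedType.Exports.
Local Open Scope classical_set_scope.
Local Open Scope ring_scope.

Section FracSum.
Variable R : realFieldType.
Implicit Types N D : R.

Lemma ltr_frac_sum N1 D1 N2 D2 :
  0 < N1 -> 0 < D1 -> 0 < N2 -> 0 < D2 -> N1 * D2 < N2 * D1 ->
  N1 / (N1 + D1) < N2 / (N2 + D2).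
Proof.
move=> N1gt0 D1gt0 N2gt0 D2gt0 lt12.
by rewrite ltr_pdivrMr ?addr_gt0 // mulrAC ltr_pdivlMr ?addr_gt0 //; nra.
Qed.

Lemma frac_sum_le_half N D : 0 < N -> 0 < D -> N <= D -> N / (N + D) <= 1 / 2.
Proof. by move=> Ngt0 Dgt0 leND; rewrite ler_pdivrMr ?addr_gt0 //; lra. Qed.

Lemma frac_sum_ge_half N D : 0 < N -> 0 < D -> D <= N -> 1 / 2 <= N / (N + D).
Proof. by move=> Ngt0 Dgt0 leDN; rewrite ler_pdivlMr ?addr_gt0 //; lra. Qed.

End FracSum.

Section CutPoints.
Variable R : realType.
Implicit Types u v lam c : R.

Lemma m_lt_m u lam c1 c2 : 0 < lam -> -1 < c1 -> c1 < c2 -> c2 < u ->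
  m_ u lam c1 < m_ u lam c2.
Proof.
move=> lam_gt0 c1_gt c12 c2_lt.
have key : 0 < lam * ((c2 - c1) * (1 + u)) by rewrite !mulr_gt0 //; lra.
by apply: ltr_frac_sum; rewrite ?mulr_gt0 //; lra.
Qed.

Lemma mm_lt_mm v lam c1 c2 : 0 < lam -> - v < c1 -> c1 < c2 -> c2 < 1 ->
  mm_ v lam c2 < mm_ v lam c1.
Proof.
move=> lam_gt0 c1_gt c12 c2_lt.
have key : 0 < lam * ((c2 - c1) * (1 + v)) by rewrite !mulr_gt0 //; lra.
by apply: ltr_frac_sum; rewrite ?mulr_gt0 //; lra.
Qed.

Lemma m_le_half u lam c : 0 < lam -> -1 < c < u ->
  lam * (1 + c) <= u - c -> m_ u lam c <= 1 / 2.
Proof.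
move=> lam_gt0 /andP[c_gt c_lt] le_lam.
by apply: frac_sum_le_half; rewrite ?mulr_gt0 //; lra.
Qed.

Lemma m_ge_half u lam c : 0 < lam -> -1 < c < u ->
  u - c <= lam * (1 + c) -> 1 / 2 <= m_ u lam c.
Proof.
move=> lam_gt0 /andP[c_gt c_lt] le_lam.
by apply: frac_sum_ge_half; rewrite ?mulr_gt0 //; lra.
Qed.

Lemma mm_le_half v lam c : 0 < lam -> - v < c < 1 ->
  lam * (1 - c) <= v + c -> mm_ v lam c <= 1 / 2.
Proof.
move=> lam_gt0 /andP[c_gt c_lt] le_lam.
by apply: frac_sum_le_half; rewrite ?mulr_gt0 //; lra.
Qed.

Lemma mm_ge_half v lam c : 0 < lam -> - v < c < 1 ->
  v + c <= lam * (1 - c) -> 1 / 2 <= mm_ v lam c.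
Proof.
move=> lam_gt0 /andP[c_gt c_lt] le_lam.
by apply: frac_sum_ge_half; rewrite ?mulr_gt0 //; lra.
Qed.

Lemma cut_points_le_half u v eps0 c lam : 0 < u -> 0 < v -> 0 < lam ->
  -1 < c < u - eps0 -> - v + eps0 < c < 1 ->
  lam < Num.min eps0 (Num.min u v) / 2 ->
  [/\ m_ u lam 0 <= 1 / 2, m_ u lam c <= 1 / 2,
      mm_ v lam 0 <= 1 / 2 & mm_ v lam c <= 1 / 2].
Proof.
move=> u_gt0 v_gt0 lam_gt0 /andP[c_gt c_lt] /andP[c_gt' c_lt'].
rewrite ltr_pdivlMr // !lt_min => /andP[lam_eps /andP[lam_u lam_v]].
split; [apply: m_le_half | apply: m_le_half | apply: mm_le_half | apply: mm_le_half];
  rewrite // ?subr0 ?addr0 ?mulr1; try (apply/andP; split); nra.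
Qed.

Lemma cut_points_ge_half u v eps0 c lam : 0 < u -> 0 < v -> 0 < eps0 ->
  -1 + eps0 < c < u -> - v < c < 1 - eps0 -> (1 + u + v) / eps0 < lam ->
  [/\ 1 / 2 <= m_ u lam 0, 1 / 2 <= m_ u lam c,
      1 / 2 <= mm_ v lam 0 & 1 / 2 <= mm_ v lam c].
Proof.
move=> u_gt0 v_gt0 eps0_gt0 /andP[c_gt c_lt] /andP[c_gt' c_lt'].
rewrite ltr_pdivrMr // => lam_eps.
have lam_gt0 : 0 < lam by nra.
have eps0_lt1 : eps0 < 1 by lra.
split; [apply: m_ge_half | apply: m_ge_half | apply: mm_ge_half | apply: mm_ge_half];
  rewrite // ?subr0 ?addr0 ?mulr1; try (apply/andP; split); nra.
Qed.

End CutPoints.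

Section NonnegIntegrals.
Variable R : realType.
Notation mu := (@lebesgue_measure R).

Lemma continuous_ge0_Rintegral_eq0 (h : R -> R) (a b : R) :
  {in `]a, b[, continuous h} -> (forall s, a < s < b -> 0 <= h s) ->
  mu.-integrable `]a, b[ (EFin \o h) ->
  \int[mu]_(s in `]a, b[) h s = 0 -> forall s, a < s < b -> h s = 0.
Proof.
move=> h_cont h_ge0 h_int int_h0 s0 s0_ab.
apply/eqP; rewrite eq_le h_ge0 // andbT leNgt; apply/negP => hs0_gt0.
have s0_in : s0 \in `]a, b[ by rewrite in_itv.
have near_s0 : \forall x \near s0, h s0 / 2 < h x /\ x \in `]a, b[.
  apply: filterI; last exact: near_in_itvoo.
  by apply: (cvgr_gt _ (h_cont s0 s0_in)); rewrite ltr_pdivrMr // ltr_pMr // ltr1n.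
have [e /= e_gt0 ball_s0] := proj1 (nbhs_ballP _ _) near_s0.
pose A : set R := `]s0 - e, s0 + e[%classic.
have in_A x : A x -> h s0 / 2 < h x /\ x \in `]a, b[.
  rewrite /A /= in_itv /= => /andP[? ?].
  by apply: ball_s0; rewrite /ball /= ltr_norml; apply/andP; split; lra.
have A_sub : A `<=` `]a, b[ by move=> x /in_A[].
have /integrableP[h_meas _] := h_int.
have int_h0E : (\int[mu]_(x in `]a, b[) (h x)%:E = 0)%E.
  by rewrite -(fineK (integrable_fin_num _ h_int)) // -[fine _]/(Rintegral _ _ _) int_h0.
have : ((h s0 / 2)%:E * mu A <= 0)%E.
  rewrite -int_h0E -integral_cst; last exact: measurable_itv.
  apply: (@le_trans _ _ (\int[mu]_(x in A) (h x)%:E)%E).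
    apply: ge0_le_integral => //; first exact: measurable_itv.
    - by move=> x _; rewrite lee_fin; apply: divr_ge0 => //; apply: ltW.
    - exact: (measurable_funS _ A_sub h_meas).
    - by move=> x /in_A[? _]; rewrite lee_fin ltW.
  by apply: ge0_subset_integral => //; exact: measurable_itv.
rewrite /A lebesgue_measure_itv /= ifT; last by rewrite lte_fin; lra.
rewrite -EFinD -EFinM lee_fin leNgt => /negP; apply.
by apply: mulr_gt0; [apply: divr_gt0 | lra].
Qed.

Lemma convex_comb_Rintegrals_eq0 (h : R -> R) (p a b : R) (D : set R) :
  0 < p < 1 -> {in `]a, b[, continuous h} ->
  (forall s, a < s < b -> 0 <= h s) -> (forall s, D s -> 0 <= h s) ->
  mu.-integrable `]a, b[ (EFin \o h) ->
  p * \int[mu]_(s in `]a, b[) h s + (1 - p) * \int[mu]_(s in D) h s = 0 ->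
  forall s, a < s < b -> h s = 0.
Proof.
move=> /andP[p_gt0 p_lt1] h_cont h_ge0 hD_ge0 h_int comb0.
apply: (continuous_ge0_Rintegral_eq0 h_cont h_ge0 h_int).
have X_ge0 : 0 <= \int[mu]_(s in `]a, b[) h s.
  by apply: Rintegral_ge0 => s /=; rewrite in_itv; apply: h_ge0.
have Y_ge0 : 0 <= \int[mu]_(s in D) h s by apply: Rintegral_ge0.
move: comb0 X_ge0 Y_ge0.
set X := \int[mu]_(s in `]a, b[) h s; set Y := \int[mu]_(s in D) h s.
by move: p_gt0 p_lt1; clear; nra.
Qed.

Lemma Rintegral_itvoo_prefixB (g : R -> R) (x a b : R) : x <= a -> a < b ->
  mu.-integrable `]x, b[ (EFin \o g) ->
  \int[mu]_(s in `]x, b[) g s - \int[mu]_(s in `]x, a[) g s =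
  \int[mu]_(s in `]a, b[) g s.
Proof.
move=> xa ab g_int.
have g_int' : mu.-integrable `]x, a[ (EFin \o g).
  apply: integrableS g_int; [exact: measurable_itv | exact: measurable_itv |].
  by move=> s /=; rewrite !in_itv /= => /andP[-> sa]; rewrite (lt_trans sa ab).
by rewrite (Rintegral_itv_bndo_bndc g_int') Rintegral_itvB ?bnd_simp.
Qed.

Lemma Rintegral_itvoo_suffixB (g : R -> R) (d e y : R) : d <= e -> e < y ->
  mu.-integrable `]d, y[ (EFin \o g) ->
  \int[mu]_(s in `]d, y[) g s - \int[mu]_(s in `]e, y[) g s =
  \int[mu]_(s in `]d, e]) g s.
Proof.
move=> de ey g_int.
have := Rintegral_itvB (x := e) g_int; rewrite !bnd_simp => /(_ de ey) <-.
by rewrite opprB addrC subrK.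
Qed.

End NonnegIntegrals.

Definition weighted (R : realType) (f : R -> R) (s : R) : R := f s * (1 - 2 * s) / s.

Lemma weighted_continuous (R : realType) (f : R -> R) (slo shi : R) : 0 <= slo ->
  {within `]slo, shi[, continuous f} -> {in `]slo, shi[, continuous (weighted f)}.
Proof.
move=> slo_ge0; rewrite continuous_open_subspace; last exact: interval_open.
move=> f_cont s s_in.
have s_gt0 : 0 < s by move: s_in; rewrite in_itv /= => /andP[slo_s _]; lra.
apply: (continuousM (s := fun s => f s * (1 - 2 * s)) (t := fun s => s^-1)).
  apply: (continuousM (s := f)); first by apply: f_cont; rewrite inE.
  by apply: cvgB; [exact: cvg_cst | apply: cvgM; [exact: cvg_cst | exact: cvg_id]].
by apply: (continuousV (s := id)); [rewrite gt_eqF | exact: cvg_id].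
Qed.

Lemma mulr_weighted_eq0 (R : realType) (f : R -> R) (sg s : R) :
  0 < s -> 0 < sg * (1 - 2 * s) -> sg * weighted f s = 0 -> f s = 0.
Proof.
move=> s_gt0 sg_s /eqP; rewrite (_ : _ * _ = f s * (sg * (1 - 2 * s)) / s).
  rewrite mulf_eq0 invr_eq0 (gt_eqF s_gt0) orbF.
  by rewrite mulf_eq0 (gt_eqF sg_s) orbF => /eqP.
by rewrite /weighted; ring.
Qed.

Definition vanishes_on_subinterval (R : realType) (slo shi : R) (f : R -> R) : Prop :=
  exists z1 z2 : R, slo < z1 /\ z1 < z2 /\ z2 < shi /\
    forall s, z1 <= s <= z2 -> f s = 0.

Lemma vanishes_on_subinterval_itv (R : realType) (slo shi a b : R) (f : R -> R) :
  slo <= a -> a < b -> b <= shi -> (forall s, a < s < b -> f s = 0) ->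
  vanishes_on_subinterval slo shi f.
Proof.
move=> slo_a ab b_shi f0; exists ((2 * a + b) / 3), ((a + 2 * b) / 3).
do 3 (split; first lra).
by move=> s /andP[? ?]; apply: f0; apply/andP; split; lra.
Qed.

Definition Gcut (R : realType) (slo shi p : R) (f : R -> R) (x y : R) : R :=
  p * \int[@lebesgue_measure R]_(s in `]slo, x[) weighted f s
  + (1 - p) * \int[@lebesgue_measure R]_(s in `]y, shi[) weighted f s.

Lemma GfE (R : realType) (slo shi p u v : R) (f : R -> R) (lam c : R) :
  Gf slo shi p u v f lam c = Gcut slo shi p f (m_ u lam c) (mm_ v lam c).
Proof. by []. Qed.

Section WeightedDensity.
Variables (R : realType) (slo shi : R) (f : R -> R).
Hypotheses (slo_ge0 : 0 <= slo) (Ff : Finf slo shi f).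
Notation mu := (@lebesgue_measure R).

Lemma weighted_integrable (i : interval R) : [set` i] `<=` `]slo, shi[%classic ->
  mu.-integrable [set` i] (EFin \o weighted f).
Proof.
move=> i_sub.
suff w_int : mu.-integrable `]slo, shi[ (EFin \o weighted f).
  by apply: integrableS w_int; [exact: measurable_itv | exact: measurable_itv | exact: i_sub].
case: Ff => f_cont [M1 f_bnd] [M2 wf_bnd] _ _.
apply: measurable_bounded_integrable; first exact: measurable_itv.
- by move: (lebesgue_measure_itv `]slo, shi[) => /= ->; case: ifP => _; exact: ltry.
- apply: open_continuous_measurable_fun; first exact: interval_open.
  by move=> s /set_mem; exact: weighted_continuous.
rewrite /bounded_near; near=> M => s /=; rewrite in_itv /= => s_in.
have s_gt0 : 0 < s by case/andP: s_in => slo_s _; apply: le_lt_trans slo_ge0 slo_s.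
have -> : weighted f s = f s * (1 - s) / s - f s by rewrite /weighted; field; rewrite gt_eqF.
have := f_bnd s s_in; have := wf_bnd s s_in.
have : M1 + M2 <= M by near: M; apply: nbhs_pinfty_ge; rewrite num_real.
move: (ler_normB (f s * (1 - s) / s) (f s)); lra.
Unshelve. all: by end_near.
Qed.

Lemma mulr_weighted_ge0 (sg s : R) : slo < s < shi -> 0 <= sg * (1 - 2 * s) ->
  0 <= sg * weighted f s.
Proof.
move=> /andP[slo_s s_shi] sg_s; have s_gt0 := le_lt_trans slo_ge0 slo_s.
have fs_ge0 : 0 <= f s by case: Ff => _ _ _ f_ge0 _; apply: f_ge0; rewrite slo_s s_shi.
rewrite (_ : _ * _ = f s * (sg * (1 - 2 * s)) / s); last by rewrite /weighted; ring.
by apply: divr_ge0; [exact: mulr_ge0 | exact: ltW].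
Qed.

Lemma GcutB (p a b d e : R) :
  slo <= a -> a < b -> b <= shi -> slo <= d -> d < e -> e < shi ->
  Gcut slo shi p f b d - Gcut slo shi p f a e =
  p * \int[mu]_(s in `]a, b[) weighted f s
  + (1 - p) * \int[mu]_(s in `]d, e]) weighted f s.
Proof.
move=> slo_a ab b_shi slo_d de e_shi.
have w_slo_b : mu.-integrable `]slo, b[ (EFin \o weighted f).
  by apply: weighted_integrable => s /=; rewrite !in_itv /= => /andP[? ?]; apply/andP; split; lra.
have w_d_shi : mu.-integrable `]d, shi[ (EFin \o weighted f).
  by apply: weighted_integrable => s /=; rewrite !in_itv /= => /andP[? ?]; apply/andP; split; lra.
have := Rintegral_itvoo_prefixB slo_a ab w_slo_b.
have := Rintegral_itvoo_suffixB (ltW de) e_shi w_d_shi.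
move=> <- <-; rewrite /Gcut; ring.
Qed.

Lemma Gcut_eq_vanish (p a b d e : R) : 0 < p < 1 ->
  slo < a < shi -> slo < b < shi -> a < b ->
  slo < d < shi -> slo < e < shi -> d < e ->
  (b <= 1 / 2 /\ e <= 1 / 2) \/ (1 / 2 <= a /\ 1 / 2 <= d) ->
  Gcut slo shi p f b d = Gcut slo shi p f a e ->
  vanishes_on_subinterval slo shi f.
Proof.
move=> p01 /andP[slo_a _] /andP[_ b_shi] ab /andP[slo_d _] /andP[_ e_shi] de sides G_eq.
have [sg [sg_ab sg_de]] : exists sg : R,
    (forall s, a < s < b -> 0 < sg * (1 - 2 * s)) /\
    (forall s, d < s <= e -> 0 <= sg * (1 - 2 * s)).
  by case: sides => [[? ?]|[? ?]]; [exists 1 | exists (-1)];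
    split=> s /andP[? ?]; lra.
case: (Ff) => f_cont _ _ _ _.
have ab_in s : a < s < b -> slo < s < shi.
  by move=> /andP[? ?]; apply/andP; split; lra.
have de_in s : d < s <= e -> slo < s < shi.
  by move=> /andP[? ?]; apply/andP; split; lra.
pose k s := sg * weighted f s.
have w_ab : mu.-integrable `]a, b[ (EFin \o weighted f).
  by apply: weighted_integrable => s /=; rewrite !in_itv /=; exact: ab_in.
have w_de : mu.-integrable `]d, e] (EFin \o weighted f).
  by apply: weighted_integrable => s /=; rewrite !in_itv /=; exact: de_in.
have k_int : mu.-integrable `]a, b[ (EFin \o k).
  have := integrableZl _ sg w_ab; move=> /(_ (measurable_itv _)).
  by apply: eq_integrable => [|s _]; [exact: measurable_itv | rewrite /= EFinM].
have comb : p * \int[mu]_(s in `]a, b[) k s + (1 - p) * \int[mu]_(s in `]d, e]) k s = 0.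
  rewrite (RintegralZl _ _ w_ab) ?(RintegralZl _ _ w_de); try exact: measurable_itv.
  rewrite mulrCA (mulrCA (1 - p)) -mulrDr -GcutB ?G_eq ?subrr ?mulr0 //; exact: ltW.
have k0 : forall s, a < s < b -> k s = 0.
  apply: (convex_comb_Rintegrals_eq0 p01 _ _ _ k_int comb).
  - move=> s; rewrite in_itv /= => s_ab.
    apply: (continuousM (s := fun=> sg)); first exact: cst_continuous.
    by apply: (weighted_continuous slo_ge0 f_cont); rewrite in_itv /= ab_in.
  - by move=> s s_ab; apply: mulr_weighted_ge0; [apply: ab_in | exact/ltW/sg_ab].
  - move=> s /=; rewrite in_itv /= => s_de.
    by apply: mulr_weighted_ge0; [apply: de_in | apply: sg_de].
apply: (vanishes_on_subinterval_itv (ltW slo_a) ab (ltW b_shi)) => s s_ab.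
apply: (mulr_weighted_eq0 _ (sg_ab s s_ab) (k0 s s_ab)).
exact: le_lt_trans slo_ge0 (lt_trans slo_a (elimT andP s_ab).1).
Qed.

End WeightedDensity.

Theorem proposition10 (R : realType) (slo shi p u v eps0 : R) :
  0 <= slo -> slo < shi -> shi <= 1 ->
  0 < p -> p < 1 -> 0 < u -> 0 < v -> u != v -> 0 < eps0 ->
  Ceps slo shi u v eps0 !=set0 ->
  exists lamlo lamhi : R, 0 < lamlo /\
    forall f : R -> R, Finf slo shi f ->
    forall c lam : R,
      c \in Ceps slo shi u v eps0 ->
      lam \in Eset slo shi u v 0 -> lam \in Eset slo shi u v c ->
      (lam < lamlo \/ lamhi < lam) ->
      Gf slo shi p u v f lam 0 = 0 -> Gf slo shi p u v f lam c = 0 ->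
      exists z1 z2 : R, slo < z1 /\ z1 < z2 /\ z2 < shi /\
        forall s, z1 <= s <= z2 -> f s = 0.
Proof.
move=> slo_ge0 _ _ p_gt0 p_lt1 u_gt0 v_gt0 _ eps0_gt0 _.
exists (Num.min eps0 (Num.min u v) / 2), ((1 + u + v) / eps0); split.
  by rewrite divr_gt0 // !lt_min eps0_gt0 u_gt0 v_gt0.
move=> f Ff c lam c_in lam_in0 lam_inc lam_extreme G0 Gc.
move: c_in; rewrite inE => -[c_in [/andP[c_lo c_hi] /andP[c_lo' c_hi']]].
move: c_in; rewrite inE => -[_ [_ c_ne0]].
move: lam_in0 lam_inc; rewrite !inE => -[lam_gt0 [m0_in mm0_in]] [_ [mc_in mmc_in]].
have p01 : 0 < p < 1 by rewrite p_gt0.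
have sides : [/\ m_ u lam 0 <= 1 / 2, m_ u lam c <= 1 / 2,
                  mm_ v lam 0 <= 1 / 2 & mm_ v lam c <= 1 / 2] \/
             [/\ 1 / 2 <= m_ u lam 0, 1 / 2 <= m_ u lam c,
                  1 / 2 <= mm_ v lam 0 & 1 / 2 <= mm_ v lam c].
  case: lam_extreme => [lam_small | lam_large]; [left | right].
  - by apply: (cut_points_le_half (eps0 := eps0)) => //; apply/andP; split; lra.
  - by apply: (cut_points_ge_half (eps0 := eps0)) => //; apply/andP; split; lra.
have G_eq : Gf slo shi p u v f lam 0 = Gf slo shi p u v f lam c by rewrite G0 Gc.
rewrite !GfE in G_eq.
case: (ltgtP c 0) c_ne0 => // [c_lt0 | c_gt0] _.
- apply: (Gcut_eq_vanish slo_ge0 Ff p01 mc_in m0_in _ mm0_in mmc_in _ _ G_eq).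
  + by apply: m_lt_m; lra.
  + by apply: mm_lt_mm; lra.
  + by case: sides => -[? ? ? ?]; [left | right].
- apply: (Gcut_eq_vanish slo_ge0 Ff p01 m0_in mc_in _ mmc_in mm0_in _ _ (esym G_eq)).
  + by apply: m_lt_m; lra.
  + by apply: mm_lt_mm; lra.
  + by case: sides => -[? ? ? ?]; [left | right].
Qed.
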